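(* Let $n\ge1$ be an integer. For every valid configuration $c\in\Omega'_n$, there exist two strictly increasing sequences $A,B:\mathbb Z\to\mathbb Z$ such that: (1) the set of positions of junction tiles in $c$ is the Cartesian product $c^{-1}(J'_n)=A(\mathbb Z)\times B(\mathbb Z)$; (2) $A(k+1)-A(k)\in\{n,n+1\}$ for every $k\in\mathbb Z$; (3) $B(k+1)-B(k)\in\{n,n+1\}$ for every $k\in\mathbb Z$.
   Context: $V_n=\{(v_0,v_1,v_2)\in\mathbb{Z}^3: 0\le v_0\le v_1\le 1,\ v_1\le v_2\le n+1\}$, elements written as words $v_0v_1v_2$. A Wang tile is $t=(a,b,c,d)$ with $\mathrm{RIGHT}(t)=a$, $\mathrm{TOP}(t)=b$, $\mathrm{LEFT}(t)=c$, $\mathrm{BOTTOM}(t)=d$; $\hat t=(b,a,d,c)$, $\hat S=\{\hat t:t\in S\}$. Define (as (right, top, left, bottom)): $W_n=\{(11(i+1),11(j+1),11i,11j):1\le i,j\le n\}$; $B'_n=\{(00(i+1),111,00i,11n):0\le i\le n\}$; $G_n=\{(01(i+1),111,00i,11(n+1)):0\le i\le n\}$; $Y_n=\{(01(i+1),112,01i,11(n+1)):1\le i\le n\}$; $A_n=\{(00(i+1),112,01i,11n):1\le i\le n\}$; $J'_n=\{((0,k,l),(0,r,s),(0,s,r+n),(0,l,k+n)):(k,l),(r,s)\in\{(0,0),(0,1),(1,1)\}\}$ (junction tiles). $\mathcal T'_n=W_n\cup B'_n\cup G_n\cup Y_n\cup A_n\cup\hat B'_n\cup\hat G_n\cup\hat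 Y_n\cup\hat A_n\cup J'_n$. $\Omega'_n$ is the set of configurations $c:\mathbb Z^2\to\mathcal T'_n$ with $\mathrm{RIGHT}(c(\mathbf m))=\mathrm{LEFT}(c(\mathbf m+\mathbf e_1))$ and $\mathrm{TOP}(c(\mathbf m))=\mathrm{BOTTOM}(c(\mathbf m+\mathbf e_2))$ for all $\mathbf m$. *)

From Stdlib Require Import ZArith.
Open Scope Z_scope.

(* A color is a word v0 v1 v2, i.e. a triple of integers. *)
Definition color : Type := (Z * Z * Z)%type.

(* Wang tile t = (a,b,c,d) with RIGHT a, TOP b, LEFT c, BOTTOM d. *)
Record tile : Type := mkTile { RIGHT : color; TOP : color; LEFT : color; BOTTOM : color }.

Definition hat (t : tile) : tile := mkTile (TOP t) (RIGHT t) (BOTTOM t) (LEFT t).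

Definition hatS (S : tile -> Prop) (t : tile) : Prop := exists u, S u /\ t = hat u.

Definition W_n (n : Z) (t : tile) : Prop :=
  exists i j, 1 <= i <= n /\ 1 <= j <= n /\
    t = mkTile (1,1,i+1) (1,1,j+1) (1,1,i) (1,1,j).

Definition B'_n (n : Z) (t : tile) : Prop :=
  exists i, 0 <= i <= n /\ t = mkTile (0,0,i+1) (1,1,1) (0,0,i) (1,1,n).

Definition G_n (n : Z) (t : tile) : Prop :=
  exists i, 0 <= i <= n /\ t = mkTile (0,1,i+1) (1,1,1) (0,0,i) (1,1,n+1).

Definition Y_n (n : Z) (t : tile) : Prop :=
  exists i, 1 <= i <= n /\ t = mkTile (0,1,i+1) (1,1,2) (0,1,i) (1,1,n+1).

Definition A_n (n : Z) (t : tile) : Prop :=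
  exists i, 1 <= i <= n /\ t = mkTile (0,0,i+1) (1,1,2) (0,1,i) (1,1,n).

Definition KL (k l : Z) : Prop := (k = 0 /\ l = 0) \/ (k = 0 /\ l = 1) \/ (k = 1 /\ l = 1).

Definition J'_n (n : Z) (t : tile) : Prop :=
  exists k l r s, KL k l /\ KL r s /\
    t = mkTile (0,k,l) (0,r,s) (0,s,r+n) (0,l,k+n).

Definition T'_n (n : Z) (t : tile) : Prop :=
  W_n n t \/ B'_n n t \/ G_n n t \/ Y_n n t \/ A_n n t \/
  hatS (B'_n n) t \/ hatS (G_n n) t \/ hatS (Y_n n) t \/ hatS (A_n n) t \/
  J'_n n t.

Definition Omega'_n (n : Z) (c : Z * Z -> tile) : Prop :=
  (forall m, T'_n n (c m)) /\
  (forall x y, RIGHT (c (x, y)) = LEFT (c (x + 1, y))) /\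
  (forall x y, TOP (c (x, y)) = BOTTOM (c (x, y + 1))).

Definition strictly_increasing (A : Z -> Z) : Prop :=
  forall i j, i < j -> A i < A j.

(* Vertical edges carry the same v0 all along a column, horizontal edges all
   along a row, and junction tiles are exactly the tiles with v0 = 0 on every
   edge; so c^-1(J'_n) is the product of the set of columns with v0 = 0
   ("junction columns") and the set of such rows.  Across a plain column
   (v0 = 1) the counter v2 of the horizontal edges goes up by one while
   staying in [0, n], hence junction columns occur in every window of n + 2
   columns.  Between two consecutive junction columns p < q the counter gives
   q - p <= n + 1 along a plain row and n <= q - p <= n + 2 along a junction
   row; if q - p = n + 2, every row is a junction row, the v1 bits at p and q
   are forced, and they propagate diagonally through the strip into a
   contradiction.  Rows are columns of the transposed configuration, obtained
   with [hat]. *)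

From Stdlib Require Import ZArith Lia Classical ClassicalEpsilon.
Open Scope Z_scope.
Set Implicit Arguments.

Lemma Z_interval_ind (P : Z -> Prop) (a b : Z) :
  P a -> (forall x, a <= x < b -> P x -> P (x + 1)) ->
  forall x, a <= x <= b -> P x.
Proof.
  intros Pa HS.
  enough (H : forall d, 0 <= d -> d <= b - a -> P (a + d)).
  { intros x Hx. replace x with (a + (x - a)) by lia. apply H; lia. }
  apply (natlike_ind (fun d => d <= b - a -> P (a + d))).
  - intros _. now rewrite Z.add_0_r.
  - intros d Hd IH Hdb. replace (a + Z.succ d) with (a + d + 1) by lia.
    apply HS; [lia | apply IH; lia].
Qed.

Lemma Z_succ_invariant_const (X : Type) (f : Z -> X) :
  (forall x, f (x + 1) = f x) -> forall x, f x = f 0.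
Proof.
  intros Hf x. induction x as [| x IH | x IH] using Z.peano_ind.
  - reflexivity.
  - now rewrite <- Z.add_1_r, Hf.
  - now rewrite <- IH, <- (Hf (Z.pred x)), Z.add_1_r, Z.succ_pred.
Qed.

Lemma strictly_increasing_of_succ (A : Z -> Z) :
  (forall k, A k < A (k + 1)) -> strictly_increasing A.
Proof.
  intros incr i j Hij.
  enough (H : forall x, i + 1 <= x <= j -> A i < A x) by (apply H; lia).
  apply (Z_interval_ind (fun x => A i < A x)); [apply incr |].
  intros x _ IH. specialize (incr x). lia.
Qed.

Lemma Z_bracket (A : Z -> Z) :
  (forall k, A k < A (k + 1)) -> forall x, exists k, A k <= x < A (k + 1).
Proof.
  intros incr x. replace x with (A 0 + (x - A 0)) by lia.
  generalize (x - A 0) as d. intro d.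
  induction d as [| d IH | d IH] using Z.peano_ind.
  - exists 0. specialize (incr 0). lia.
  - destruct IH as (k & Hk).
    destruct (Z.eq_dec (A 0 + Z.succ d) (A (k + 1))).
    + exists (k + 1). specialize (incr (k + 1)). lia.
    + exists k. lia.
  - destruct IH as (k & Hk).
    destruct (Z.eq_dec (A 0 + d) (A k)).
    + exists (k - 1). specialize (incr (k - 1)).
      replace (k - 1 + 1) with k in * by lia. lia.
    + exists k. lia.
Qed.

Lemma least_point (P : Z -> Prop) (a z : Z) :
  a <= z -> P z -> exists m, a <= m /\ P m /\ forall x, a <= x < m -> ~ P x.
Proof.
  intros Haz Pz. apply NNPP. intro no_least.
  enough (H : forall x, a <= x <= z -> forall y, a <= y <= x -> ~ P y)
    by exact (H z ltac:(lia) z ltac:(lia) Pz).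
  apply (Z_interval_ind (fun x => forall y, a <= y <= x -> ~ P y)).
  - intros y Hy Py. apply no_least. exists a.
    replace y with a in Py by lia. split; [lia | split; [exact Py | lia]].
  - intros x Hx IH y Hy Py.
    destruct (Z.eq_dec y (x + 1)) as [-> | Hne]; [| apply (IH y); [lia | exact Py]].
    apply no_least. exists (x + 1). split; [lia | split; [exact Py |]].
    intros w Hw. apply IH. lia.
Qed.

Lemma Z_orbit (X : Type) (Q : X -> Prop) (f g : X -> X) (x0 : X) :
  Q x0 -> (forall x, Q x -> Q (g x)) -> (forall x, Q x -> f (g x) = x) ->
  exists A : Z -> X, forall k, A (k + 1) = f (A k).
Proof.
  intros Q0 Qg fg.
  assert (Qiter : forall m, Q (Nat.iter m g x0))
    by (intro m; induction m; simpl; auto).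
  exists (fun k => if k <? 0 then Nat.iter (Z.to_nat (- k)) g x0
                   else Nat.iter (Z.to_nat k) f x0).
  intro k. destruct (Z.ltb_spec k 0) as [Hk | Hk].
  - replace (Z.to_nat (- k)) with (S (Z.to_nat (- (k + 1)))) by lia.
    rewrite Nat.iter_succ, fg by apply Qiter.
    destruct (Z.ltb_spec (k + 1) 0); [reflexivity |].
    now replace (k + 1) with 0 by lia.
  - rewrite (proj2 (Z.ltb_ge (k + 1) 0)) by lia.
    now replace (Z.to_nat (k + 1)) with (S (Z.to_nat k)) by lia.
Qed.

Definition next_point (P : Z -> Prop) (p q : Z) : Prop :=
  p < q /\ P q /\ forall x, p < x < q -> ~ P x.

Lemma next_point_unique (P : Z -> Prop) (p q q' : Z) :
  next_point P p q -> next_point P p q' -> q = q'.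
Proof.
  intros (Hpq & Pq & Bq) (Hpq' & Pq' & Bq').
  destruct (Z.lt_trichotomy q q') as [H | [H | H]]; [| exact H |]; exfalso.
  - exact (Bq' q ltac:(lia) Pq).
  - exact (Bq q' ltac:(lia) Pq').
Qed.

Section Syndetic.

Variables (P : Z -> Prop) (w : Z).
Hypothesis P_window : forall x, exists z, x <= z <= x + w /\ P z.

Lemma next_point_exists (p : Z) : exists q, next_point P p q.
Proof.
  destruct (P_window (p + 1)) as (z & Hz & Pz).
  destruct (least_point P (z := z) (a := p + 1)) as (m & Hm & Pm & Bm);
    [lia | exact Pz |].
  exists m. split; [lia | split; [exact Pm |]].
  intros x Hx. apply Bm. lia.
Qed.

Lemma prev_point_exists (q : Z) : P q -> exists p, P p /\ next_point P p q.
Proof.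
  intro Pq. destruct (P_window (q - 1 - w)) as (z & Hz & Pz).
  destruct (least_point (fun x => P (- x)) (a := 1 - q) (z := - z))
    as (m & Hm & Pm & Bm); [lia | now rewrite Z.opp_involutive |].
  exists (- m). split; [exact Pm | split; [lia | split; [exact Pq |]]].
  intros x Hx. rewrite <- (Z.opp_involutive x). apply Bm. lia.
Qed.

Theorem syndetic_enumeration :
  exists A : Z -> Z, strictly_increasing A /\ (forall x, P x <-> exists i, x = A i) /\
    forall k, next_point P (A k) (A (k + 1)).
Proof.
  destruct (choice (next_point P) next_point_exists) as (nx & Hnx).
  destruct (choice (fun q p => P q -> P p /\ next_point P p q)) as (pv & Hpv).
  { intro q. destruct (classic (P q)) as [Pq | nPq].
    - destruct (prev_point_exists Pq) as (p & Hp). now exists p.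
    - now exists q. }
  destruct (P_window 0) as (p0 & _ & P0).
  destruct (Z_orbit P nx pv p0 P0) as (A & HA).
  - intros q Pq. apply (Hpv q Pq).
  - intros q Pq. apply (next_point_unique (Hnx (pv q))), (Hpv q Pq).
  - assert (step : forall k, next_point P (A k) (A (k + 1)))
      by (intro k; rewrite HA; apply Hnx).
    assert (incr : forall k, A k < A (k + 1)) by apply step.
    exists A. split; [now apply strictly_increasing_of_succ | split; [| exact step]].
    intro x. split.
    + intro Px. destruct (Z_bracket A incr x) as (k & Hk). exists k.
      destruct (Z.eq_dec x (A k)) as [E | E]; [exact E | exfalso].
      apply (proj2 (proj2 (step k)) x); [lia | exact Px].
    + intros (i & ->). replace i with (i - 1 + 1) by lia. apply step.
Qed.

End Syndetic.

Definition v0 (v : color) : Z := fst (fst v).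
Definition v1 (v : color) : Z := snd (fst v).
Definition v2 (v : color) : Z := snd v.

(* [hborder_*]: the tiles of B'_n, G_n, Y_n, A_n, the only ones with
   v0 (TOP) = 1 and v0 (RIGHT) = 0; [vborder_*]: their hats. *)
Record tile_invariants (n : Z) (t : tile) : Prop := {
  v0_TOP_cases : v0 (TOP t) = 0 \/ v0 (TOP t) = 1;
  v0_BOTTOM_TOP : v0 (BOTTOM t) = v0 (TOP t);
  v1_TOP_range : 0 <= v1 (TOP t) <= 1;
  v1_BOTTOM_range : 0 <= v1 (BOTTOM t) <= 1;
  counter_step : v0 (TOP t) = 1 -> v2 (RIGHT t) = v2 (LEFT t) + 1;
  counter_range : v0 (TOP t) = 1 -> 0 <= v2 (LEFT t) <= n;
  hborder_v2_TOP : v0 (TOP t) = 1 -> v0 (RIGHT t) = 0 -> v2 (TOP t) = 1 + v1 (LEFT t);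
  hborder_v2_BOTTOM : v0 (TOP t) = 1 -> v0 (RIGHT t) = 0 ->
    v2 (BOTTOM t) = n + v1 (RIGHT t);
  vborder_v2_RIGHT : v0 (TOP t) = 0 -> v0 (RIGHT t) = 1 -> v2 (RIGHT t) = 1 + v1 (BOTTOM t);
  vborder_v2_LEFT : v0 (TOP t) = 0 -> v0 (RIGHT t) = 1 -> v2 (LEFT t) = n + v1 (TOP t);
  junction_v2_RIGHT : v0 (TOP t) = 0 -> v0 (RIGHT t) = 0 -> v2 (RIGHT t) = v1 (BOTTOM t);
  junction_v2_LEFT : v0 (TOP t) = 0 -> v0 (RIGHT t) = 0 -> v2 (LEFT t) = n + v1 (TOP t);
  junction_v1_RIGHT : v0 (TOP t) = 0 -> v0 (RIGHT t) = 0 ->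
    v1 (BOTTOM t) = 0 -> v1 (RIGHT t) = 0;
  junction_v1_LEFT : v0 (TOP t) = 0 -> v0 (RIGHT t) = 0 ->
    v1 (TOP t) = 1 -> v1 (LEFT t) = 1;
  junction_of_v0 : v0 (TOP t) = 0 -> v0 (RIGHT t) = 0 -> J'_n n t;
  v0_of_junction : J'_n n t -> v0 (TOP t) = 0 /\ v0 (RIGHT t) = 0
}.

Ltac check_tile_invariants :=
  split; unfold v0, v1, v2; cbn; intros; try lia; try assumption;
  match goal with
  | H : J'_n _ _ |- _ =>
      let E := fresh in destruct H as (? & ? & ? & ? & _ & _ & E); injection E; lia
  end.

Lemma T'_n_invariants (n : Z) (t : tile) : T'_n n t -> tile_invariants n t.
Proof.
  intros [H|[H|[H|[H|[H|[H|[H|[H|[H|H]]]]]]]]].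
  - destruct H as (i & j & Hi & Hj & ->). check_tile_invariants.
  - destruct H as (i & Hi & ->). check_tile_invariants.
  - destruct H as (i & Hi & ->). check_tile_invariants.
  - destruct H as (i & Hi & ->). check_tile_invariants.
  - destruct H as (i & Hi & ->). check_tile_invariants.
  - destruct H as (u & (i & Hi & ->) & ->). check_tile_invariants.
  - destruct H as (u & (i & Hi & ->) & ->). check_tile_invariants.
  - destruct H as (u & (i & Hi & ->) & ->). check_tile_invariants.
  - destruct H as (u & (i & Hi & ->) & ->). check_tile_invariants.
  - pose proof H as HJ. destruct H as (k & l & r & s & Hkl & Hrs & ->).
    destruct Hkl as [[-> ->] | [[-> ->] | [-> ->]]];
      destruct Hrs as [[-> ->] | [[-> ->] | [-> ->]]]; check_tile_invariants.
Qed.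

Lemma hat_involutive (t : tile) : hat (hat t) = t.
Proof. now destruct t. Qed.

Lemma T'_n_hat (n : Z) (t : tile) : T'_n n t -> T'_n n (hat t).
Proof.
  unfold T'_n, hatS.
  intros [H|[H|[H|[H|[H|[H|[H|[H|[H|H]]]]]]]]].
  - left. destruct H as (i & j & Hi & Hj & ->). now exists j, i.
  - do 5 right; left. now exists t.
  - do 6 right; left. now exists t.
  - do 7 right; left. now exists t.
  - do 8 right; left. now exists t.
  - right; left. destruct H as (u & Hu & ->). now rewrite hat_involutive.
  - do 2 right; left. destruct H as (u & Hu & ->). now rewrite hat_involutive.
  - do 3 right; left. destruct H as (u & Hu & ->). now rewrite hat_involutive.
  - do 4 right; left. destruct H as (u & Hu & ->). now rewrite hat_involutive.
  - do 9 right. destruct H as (k & l & r & s & Hkl & Hrs & ->). now exists r, s, k, l.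
Qed.

Definition transpose (c : Z * Z -> tile) : Z * Z -> tile :=
  fun m => hat (c (snd m, fst m)).

Lemma transpose_Omega (n : Z) (c : Z * Z -> tile) :
  Omega'_n n c -> Omega'_n n (transpose c).
Proof.
  intros (HT & HH & HV). unfold transpose.
  split; [| split]; intros; cbn; auto using T'_n_hat.
Qed.

Definition junction_col (c : Z * Z -> tile) (x : Z) : Prop := v0 (TOP (c (x, 0))) = 0.

Definition junction_row (c : Z * Z -> tile) (y : Z) : Prop := junction_col (transpose c) y.

Section Columns.

Variables (n : Z) (c : Z * Z -> tile).
Hypotheses (hn : 1 <= n) (hc : Omega'_n n c).

Let inv (m : Z * Z) : tile_invariants n (c m) := T'_n_invariants (proj1 hc m).
Let right_left := proj1 (proj2 hc).
Let top_bottom := proj2 (proj2 hc).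

Lemma junction_col_iff (x y : Z) : junction_col c x <-> v0 (TOP (c (x, y))) = 0.
Proof.
  unfold junction_col.
  enough (E : v0 (TOP (c (x, y))) = v0 (TOP (c (x, 0)))) by (rewrite E; reflexivity).
  apply (Z_succ_invariant_const (fun y => v0 (TOP (c (x, y))))).
  intro z. now rewrite <- (v0_BOTTOM_TOP (inv (x, z + 1))), <- top_bottom.
Qed.

Lemma plain_col_v0 (x y : Z) : ~ junction_col c x -> v0 (TOP (c (x, y))) = 1.
Proof.
  rewrite (junction_col_iff x y). now destruct (v0_TOP_cases (inv (x, y))).
Qed.

Lemma v2_LEFT_across_plain_cols (a b y : Z) :
  a <= b -> (forall x, a <= x < b -> ~ junction_col c x) ->
  v2 (LEFT (c (b, y))) = v2 (LEFT (c (a, y))) + (b - a).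
Proof.
  intros Hab Hplain.
  apply (Z_interval_ind (fun x => v2 (LEFT (c (x, y))) = v2 (LEFT (c (a, y))) + (x - a))
           (a := a) (b := b));
    [lia | | lia].
  intros x Hx IH.
  rewrite <- right_left, (counter_step (inv (x, y))) by (apply plain_col_v0, Hplain; lia).
  lia.
Qed.

Lemma junction_col_window (x : Z) : exists z, x <= z <= x + (n + 1) /\ junction_col c z.
Proof.
  apply NNPP. intro none.
  assert (Hplain : forall z, x <= z <= x + n + 1 -> ~ junction_col c z)
    by (intros z Hz Hj; apply none; exists z; split; [lia | exact Hj]).
  pose proof (v2_LEFT_across_plain_cols 0 (a := x) (b := x + n + 1)) as E.
  pose proof (counter_range (inv (x, 0)) (plain_col_v0 0 (Hplain x ltac:(lia)))).
  pose proof (counter_range (inv (x + n + 1, 0))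
                (plain_col_v0 0 (Hplain (x + n + 1) ltac:(lia)))).
  specialize (E ltac:(lia) ltac:(intros z Hz; apply Hplain; lia)).
  lia.
Qed.

End Columns.

Section Junctions.

Variables (n : Z) (c : Z * Z -> tile).
Hypotheses (hn : 1 <= n) (hc : Omega'_n n c).

Let inv (m : Z * Z) : tile_invariants n (c m) := T'_n_invariants (proj1 hc m).
Let right_left := proj1 (proj2 hc).
Let top_bottom := proj2 (proj2 hc).

Lemma junction_row_iff (x y : Z) : junction_row c y <-> v0 (RIGHT (c (x, y))) = 0.
Proof. exact (junction_col_iff (transpose_Omega hc) y x). Qed.

Lemma plain_row_v0 (x y : Z) : ~ junction_row c y -> v0 (RIGHT (c (x, y))) = 1.
Proof. exact (plain_col_v0 (transpose_Omega hc) x). Qed.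

Lemma junction_row_window (y : Z) : exists z, y <= z <= y + (n + 1) /\ junction_row c z.
Proof. exact (junction_col_window hn (transpose_Omega hc) y). Qed.

Lemma junction_iff (x y : Z) : J'_n n (c (x, y)) <-> junction_col c x /\ junction_row c y.
Proof.
  rewrite (junction_col_iff hc x y), (junction_row_iff x y).
  split; [apply (v0_of_junction (inv (x, y))) |].
  intros []. now apply (junction_of_v0 (inv (x, y))).
Qed.

(* The v2 equations of the two hborder tiles (x, y) and (x, y + 1) meet on
   their common edge, and n >= 1. *)
Lemma hborder_v1_descent (x y : Z) :
  ~ junction_col c x -> junction_row c y -> junction_row c (y + 1) ->
  v1 (RIGHT (c (x, y + 1))) <= v1 (LEFT (c (x, y))).
Proof.
  intros Hx Hy Hy1.
  pose proof (hborder_v2_TOP (inv (x, y)) (plain_col_v0 hc y Hx)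
                (proj1 (junction_row_iff x y) Hy)) as Etop.
  pose proof (hborder_v2_BOTTOM (inv (x, y + 1)) (plain_col_v0 hc (y + 1) Hx)
                (proj1 (junction_row_iff x (y + 1)) Hy1)) as Ebot.
  rewrite <- top_bottom in Ebot. lia.
Qed.

Section Gap.

Variables p q : Z.
Hypotheses (Hp : junction_col c p) (Hpq : next_point (junction_col c) p q).

Let Hq : junction_col c q := proj1 (proj2 Hpq).

Lemma v2_LEFT_next_junction (y : Z) :
  v2 (LEFT (c (q, y))) = v2 (RIGHT (c (p, y))) + (q - p - 1).
Proof.
  pose proof Hpq as (Hlt & _ & Hplain).
  rewrite (v2_LEFT_across_plain_cols hc y (a := p + 1) (b := q));
    [| lia | intros x Hx; apply Hplain; lia].
  rewrite <- right_left. lia.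
Qed.

Lemma gap_on_plain_row (y : Z) :
  ~ junction_row c y -> q - p = n + v1 (TOP (c (q, y))) - v1 (BOTTOM (c (p, y))).
Proof.
  intro Hy. pose proof (v2_LEFT_next_junction y) as E.
  rewrite (vborder_v2_RIGHT (inv (p, y))), (vborder_v2_LEFT (inv (q, y))) in E;
    try apply (junction_col_iff hc); try apply plain_row_v0; auto.
  lia.
Qed.

Lemma gap_on_junction_row (y : Z) :
  junction_row c y -> q - p = n + 1 + v1 (TOP (c (q, y))) - v1 (BOTTOM (c (p, y))).
Proof.
  intro Hy. pose proof (v2_LEFT_next_junction y) as E.
  rewrite (junction_v2_RIGHT (inv (p, y))), (junction_v2_LEFT (inv (q, y))) in E;
    try apply (junction_col_iff hc); try apply junction_row_iff; auto.
  lia.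
Qed.

Lemma junction_strip_v1_absurd :
  (forall y, junction_row c y) -> (forall y, v1 (RIGHT (c (p, y))) = 0) ->
  (forall y, v1 (LEFT (c (q, y))) = 1) -> False.
Proof.
  intros Hrows Hp1 Hq1. pose proof Hpq as (Hlt & _ & Hplain).
  enough (H : forall x, p + 1 <= x <= q -> v1 (LEFT (c (x, x - p - 1))) <= 0)
    by (specialize (H q ltac:(lia)); rewrite Hq1 in H; lia).
  apply (Z_interval_ind (fun x => v1 (LEFT (c (x, x - p - 1))) <= 0)).
  - replace (p + 1 - p - 1) with 0 by lia. rewrite <- right_left, Hp1. lia.
  - intros x Hx IH. replace (x + 1 - p - 1) with (x - p - 1 + 1) by lia.
    rewrite <- right_left.
    pose proof (hborder_v1_descent (y := x - p - 1) (Hplain x ltac:(lia))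
                  (Hrows _) (Hrows _)).
    lia.
Qed.

Lemma junction_col_gap : q - p = n \/ q - p = n + 1.
Proof.
  assert (range : forall y,
             0 <= v1 (TOP (c (q, y))) <= 1 /\ 0 <= v1 (BOTTOM (c (p, y))) <= 1)
    by (intro y; exact (conj (v1_TOP_range (inv (q, y))) (v1_BOTTOM_range (inv (p, y))))).
  destruct (junction_row_window 0) as (y0 & _ & Hy0).
  pose proof (gap_on_junction_row Hy0). pose proof (range y0).
  destruct (Z.le_gt_cases (q - p) (n + 1)); [lia | exfalso].
  assert (Hrows : forall y, junction_row c y).
  { intro y. apply NNPP. intro Hy.
    pose proof (gap_on_plain_row Hy). pose proof (range y). lia. }
  assert (Hjunction : forall y, v0 (TOP (c (p, y))) = 0 /\ v0 (TOP (c (q, y))) = 0 /\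
                                v0 (RIGHT (c (p, y))) = 0 /\ v0 (RIGHT (c (q, y))) = 0).
  { intro y. rewrite <- !(junction_col_iff hc), <- !junction_row_iff. auto. }
  apply junction_strip_v1_absurd; [exact Hrows | intro y | intro y];
    pose proof (gap_on_junction_row (Hrows y)); pose proof (range y);
    destruct (Hjunction y) as (Tp & Tq & Rp & Rq).
  - apply (junction_v1_RIGHT (inv (p, y))); auto; lia.
  - apply (junction_v1_LEFT (inv (q, y))); auto; lia.
Qed.

End Gap.

End Junctions.

Theorem lemma6p3 (n : Z) (hn : 1 <= n) (c : Z * Z -> tile) (hc : Omega'_n n c) :
  exists A B : Z -> Z,
    strictly_increasing A /\ strictly_increasing B /\
    (forall x y, J'_n n (c (x, y)) <-> (exists i j, x = A i /\ y = B j)) /\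
    (forall k, A (k + 1) - A k = n \/ A (k + 1) - A k = n + 1) /\
    (forall k, B (k + 1) - B k = n \/ B (k + 1) - B k = n + 1).
Proof.
  destruct (syndetic_enumeration _ _ (junction_col_window hn hc))
    as (A & incA & rangeA & stepA).
  destruct (syndetic_enumeration _ _ (junction_row_window hn hc))
    as (B & incB & rangeB & stepB).
  exists A, B. split; [exact incA | split; [exact incB | split; [| split]]].
  - intros x y. rewrite (junction_iff hc), rangeA, rangeB. firstorder.
  - intro k. apply (junction_col_gap hn hc); [apply rangeA; eauto | apply stepA].
  - intro k. apply (junction_col_gap hn (transpose_Omega hc));
      [apply rangeB; eauto | apply stepB].
Qed.
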